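(* Let $n, t', r$ be positive integers and let $T$ be a $(t'+2r)$-element subset of $[n]$. For any distinct $A, B\in \binom{T}{r+t'}$, setting $w=\left\lfloor\frac{|A \cap B|}{t'}\right\rfloor+1$, there exist $A_1, A_2, \ldots, A_{2w} \in \binom{T}{r+t'}$ such that (1) $|A_i \cap A_{i+1}|=t'$ for $i=1,\ldots, 2w-1$; (2) $A_1=B$ and $A_{2w}=A$.
   Context: $[n]=\{1,\dots,n\}$ and $\binom{D}{k}$ denotes the family of all $k$-element subsets of a finite set $D$. *)

From mathcomp Require Import all_boot.
Set Implicit Arguments. Unset Strict Implicit. Unset Printing Implicit Defensive.

From mathcomp Require Import all_boot zify.

Set Implicit Arguments.
Unset Strict Implicit.
Unset Printing Implicit Defensive.

(* Since #|T| = t' + 2r, two (r+t')-subsets X, Y of T cover T exactly when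
   #|X :&: Y| = t', so it suffices to walk from B to A through covering pairs.
   If the current set X meets A in s > t' points, then s - t' points of T lie
   outside X :|: A; trading k <= t' points of X :&: A for k of them yields a
   set Z meeting A in s - k points and X in at least r points, and X, T \ W, Z
   is a covering walk for any r-subset W of X :&: Z.  After s %/ t' such double
   steps the current set meets A in at most t' points, so it covers T together
   with A. *)

Lemma exists_subset_card {U : finType} {S : {set U}} {k : nat} :
  k <= #|S| -> exists2 S' : {set U}, S' \subset S & #|S'| = k.
Proof.
case/card_geqP=> s [s_uniq <- sS]; exists [set x in s].
  by apply/subsetP=> x; rewrite inE => /sS.
by rewrite cardsE (card_uniqP s_uniq).
Qed.

Section Walks.

Variables (n t' r : nat) (T : {set 'I_n}).
Hypothesis cardT : #|T| = t' + 2 * r.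

Definition layer : pred {set 'I_n} := fun X => (X \subset T) && (#|X| == r + t').

Definition covers : rel {set 'I_n} := fun X Y => X :|: Y == T.

Definition walk L (X Y : {set 'I_n}) := exists p : seq {set 'I_n},
  [/\ size p = L, all layer p, path covers X p & last X p = Y].

Lemma covers_card_meet X Y :
  layer X -> layer Y -> covers X Y -> #|X :&: Y| = t'.
Proof.
move=> /andP[_ /eqP cX] /andP[_ /eqP cY] /eqP XY.
by have := cardsUI X Y; rewrite XY cardT cX cY; lia.
Qed.

Lemma layer_card_meet X Y : layer X -> layer Y -> t' <= #|X :&: Y|.
Proof.
move=> /andP[XT /eqP cX] /andP[YT /eqP cY].
have : #|X :|: Y| <= #|T| by apply: subset_leq_card; rewrite subUset XT YT.
by have := cardsUI X Y; rewrite cardT cX cY; lia.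
Qed.

Lemma covers_small_meet X Y :
  layer X -> layer Y -> #|X :&: Y| <= t' -> covers X Y.
Proof.
move=> /andP[XT /eqP cX] /andP[YT /eqP cY] small.
rewrite /covers eqEcard subUset XT YT /=.
by rewrite -(leq_add2r #|X :&: Y|) cardsUI cardT cX cY; lia.
Qed.

Lemma walk1 X Y : layer Y -> covers X Y -> walk 1 X Y.
Proof. by move=> lY XY; exists [:: Y]; rewrite /= lY XY. Qed.

Lemma walk_cat L1 L2 X Y Z : walk L1 X Y -> walk L2 Y Z -> walk (L1 + L2) X Z.
Proof.
move=> [p [<- lp Xp <-]] [q [<- lq Yq <-]]; exists (p ++ q).
by rewrite size_cat all_cat cat_path last_cat lp lq Xp Yq.
Qed.

Lemma walk2_large_meet X Z : layer X -> layer Z -> r <= #|X :&: Z| -> walk 2 X Z.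
Proof.
move=> lX lZ /(@exists_subset_card _ (X :&: Z))[W].
rewrite subsetI => /andP[WX WZ] cW.
have WT : W \subset T by apply: subset_trans WX (andP lX).1.
have covers_compl (V : {set 'I_n}) : W \subset V -> layer V -> covers V (T :\: W).
  move=> WV /andP[VT _]; rewrite /covers eqEsubset subUset VT subsetDl /=.
  apply/subsetP=> x xT; rewrite !inE xT andbT.
  by case/boolP: (x \in W) => [/(subsetP WV) -> | _]; rewrite ?orbT.
have lTW : layer (T :\: W).
  by rewrite /layer subsetDl cardsD (setIidPr WT) cardT cW; apply/eqP; lia.
rewrite -[2]/(1 + 1); apply: (@walk_cat 1 1 _ (T :\: W)); apply: walk1 => //.
  exact: covers_compl.
by rewrite /covers setUC; apply: covers_compl.
Qed.

Lemma exchange_step X A k : layer X -> layer A -> k <= t' -> t' + k <= #|X :&: A| ->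
  exists Z, [/\ layer Z, r <= #|X :&: Z| & #|Z :&: A| <= #|X :&: A| - k].
Proof.
move=> /andP[XT /eqP cX] /andP[AT /eqP cA] le_k_t' le_k_XA.
have XAT : X :|: A \subset T by rewrite subUset XT AT.
have [E sE cE] :=
  @exists_subset_card _ (X :&: A) k (leq_trans (leq_addl _ _) le_k_XA).
have EX : E \subset X by apply: subset_trans sE (subsetIl _ _).
have le_k_gap : k <= #|T :\: (X :|: A)|.
  rewrite cardsD (setIidPr XAT) cardT.
  by move: le_k_XA; rewrite -(leq_add2l #|X :|: A|) cardsUI cX cA; lia.
have [D sD cD] := exists_subset_card le_k_gap.
have DX : (X :\: E) :&: D = set0.
  apply/setP=> x; rewrite !inE; apply/negbTE; apply/negP=> /andP[/andP[_ xX]].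
  by move/(subsetP sD); rewrite !inE xX.
exists ((X :\: E) :|: D); split.
- rewrite /layer subUset (subset_trans (subsetDl _ _) XT).
  rewrite (subset_trans sD (subsetDl _ _)) cardsU DX cards0 cardsD (setIidPr EX).
  by rewrite cX cE cD; apply/eqP; lia.
- have : X :\: E \subset X :&: ((X :\: E) :|: D).
    by rewrite subsetI subsetDl subsetUl.
  by move/subset_leq_card; rewrite cardsD (setIidPr EX) cX cE; lia.
- have : ((X :\: E) :|: D) :&: A \subset (X :&: A) :\: E.
    apply/subsetP=> x; rewrite !inE => /andP[/orP[/andP[xE xX] | xD] xA].
      by rewrite xE xX xA.
    by move: (subsetP sD x xD); rewrite !inE xA orbT.
  by move/subset_leq_card; rewrite cardsD (setIidPr sE) cE.
Qed.

Lemma walk_of_meet_le A j X : layer A -> layer X ->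
  #|X :&: A| <= j.+1 * t' -> walk (2 * j).+1 X A.
Proof.
move=> lA; elim: j X => [|j IH] X lX small.
  by apply: walk1 => //; apply: covers_small_meet; rewrite // -(mul1n t').
set k := #|X :&: A| - j.+1 * t'.
have le_t'_jt' : t' <= j.+1 * t' by rewrite mulSn leq_addr.
have meet_XA := layer_card_meet lX lA.
have le_k_t' : k <= t' by move: small; rewrite /k mulSn; lia.
have le_k_XA : t' + k <= #|X :&: A| by rewrite /k; lia.
have [Z [lZ r_XZ ZA]] := exchange_step lX lA le_k_t' le_k_XA.
have -> : (2 * j.+1).+1 = 2 + (2 * j).+1 by lia.
by apply: walk_cat (walk2_large_meet lX lZ r_XZ) (IH Z lZ _); lia.
Qed.

End Walks.

Theorem lemma4p4 (n t' r : nat) (T : {set 'I_n}) (A B : {set 'I_n}) :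
  0 < n -> 0 < t' -> 0 < r ->
  #|T| = t' + 2 * r ->
  A \subset T -> #|A| = r + t' ->
  B \subset T -> #|B| = r + t' ->
  A != B ->
  let w := #|A :&: B| %/ t' + 1 in
  exists As : nat -> {set 'I_n},
    (forall i, 1 <= i <= 2 * w -> As i \subset T /\ #|As i| = r + t') /\
    (forall i, 1 <= i <= 2 * w - 1 -> #|As i :&: As i.+1| = t') /\
    As 1 = B /\ As (2 * w) = A.
Proof.
move=> _ t'_gt0 _ cardT AT cA BT cB _ w.
have lA : layer t' r T A by rewrite /layer AT cA eqxx.
have lB : layer t' r T B by rewrite /layer BT cB eqxx.
have meet_BA : #|B :&: A| <= (#|A :&: B| %/ t').+1 * t'.
  by rewrite setIC ltnW // ltn_ceil.
have [p [size_p lp path_p last_p]] := walk_of_meet_le cardT lA lB meet_BA.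
have size_w : 2 * w = size (B :: p) by rewrite /= size_p /w; lia.
have layer_nth i : i < 2 * w -> layer t' r T (nth B (B :: p) i).
  by rewrite size_w; apply/all_nthP; rewrite /= lB.
have /(pathP B) cover_nth := path_p.
exists (fun i => nth B (B :: p) i.-1); split; [|split; [|split]] => //.
- by case=> // i /andP[_ /layer_nth /andP[-> /eqP ->]].
- case=> // i /andP[_ lt_iw] /=.
  have lt_iw' : i.+1 < 2 * w by lia.
  have lt_ip : i < size p by move: lt_iw'; rewrite size_w.
  have := covers_card_meet cardT (layer_nth i (ltnW lt_iw')) (layer_nth i.+1 lt_iw').
  by apply; apply: cover_nth.
- by rewrite size_w nth_last.
Qed.
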